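(* Let $\Phi_U$ be a pmf on a countable $\mathcal U$, $\Phi_{V|U}$ a channel to a countable $\mathcal V$, and $Q_V=\Phi_V=\sum_u\Phi_U\Phi_{V|U}$. Let $u(1),\dots,u(M)$ be drawn independently from $\Phi_U$ and let $P_V(v)=\frac1M\sum_{j=1}^M\Phi_{V|U}(v|u(j))$. Then for every $\tau$, $$\mathbf E\|P_V-Q_V\|_{TV}\le\mathbf P_\Phi(\mathcal A'^c_\tau)+\delta'_\Phi(\tau),$$ where $\mathcal A'_\tau=\{(u,v):i_\Phi(u;v)\le\tau\}$ and $$\delta'_\Phi(\tau)=\frac{1}{2\sqrt M}\mathbf E_{\Phi_V}\sqrt{\mathbf E_{\Phi_{U|V}}\,2^{\,i_\Phi(U;V)}\mathbf 1_{\mathcal A'_\tau}(U,V)}\le\frac12\sqrt{\frac{2^\tau}{M}}.$$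
   Context: Expectation on the left is over the random codebook. $i_\Phi(u;v)=\log\frac{\Phi_{U,V}(u,v)}{\Phi_U(u)\Phi_V(v)}$, base-2 logarithm. Total variation is half the $\ell_1$ distance. *)

(* classical reals. Countable alphabets are encoded as nat. *)
From Stdlib Require Import Reals List Classical ClassicalEpsilon.
Open Scope R_scope.

Definition ssum (f : nat -> R) : R :=
  match excluded_middle_informative (exists l, infinite_sum f l) with
  | left H => proj1_sig (constructive_indefinite_description _ H)
  | right _ => 0
  end.

Definition log2 (x : R) : R := ln x / ln 2.

Definition outdist (PU : nat -> R) (W : nat -> nat -> R) (v : nat) : R :=
  ssum (fun u => PU u * W u v).

Definition info (PU : nat -> R) (W : nat -> nat -> R) (u v : nat) : R :=
  log2 ((PU u * W u v) / (PU u * outdist PU W v)).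

Definition indic (b : bool) : R := if b then 1 else 0.
Definition leRb (x y : R) : bool := if Rle_dec x y then true else false.

Definition tv (P Q : nat -> R) : R := / 2 * ssum (fun v => Rabs (P v - Q v)).

Definition codebook_out (W : nat -> nat -> R) (l : list nat) (v : nat) : R :=
  / INR (length l) * fold_right (fun u acc => W u v + acc) 0 l.

(* Expectation over a codebook of M codewords drawn i.i.d. from PU. *)
Fixpoint Ecb (PU : nat -> R) (M : nat) (F : list nat -> R) : R :=
  match M with
  | O => F nil
  | S m => ssum (fun u => PU u * Ecb PU m (fun l => F (u :: l)))
  end.

Definition prob_Ac (PU : nat -> R) (W : nat -> nat -> R) (tau : R) : R :=
  ssum (fun u => ssum (fun v =>
    PU u * W u v * indic (negb (leRb (info PU W u v) tau)))).

(* delta'_Phi(tau). Phi_{U|V}(u|v) = Phi_U(u) Phi_{V|U}(v|u) / Phi_V(v). *)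
Definition delta' (PU : nat -> R) (W : nat -> nat -> R) (M : nat) (tau : R) : R :=
  / (2 * sqrt (INR M)) *
  ssum (fun v => outdist PU W v *
    sqrt (ssum (fun u => (PU u * W u v / outdist PU W v)
                         * Rpower 2 (info PU W u v)
                         * indic (leRb (info PU W u v) tau)))).

(* For a codebook u(1..M) drawn i.i.d. from Phi_U, write the channel as
   W(v|u) = W_typ(v|u) + W_atyp(v|u), splitting according to whether
   i(u;v) <= tau.  Pointwise in v, the triangle inequality gives
     |P_V(v) - Q_V(v)| <= |(1/M) sum_j W_typ(v|u_j) - E W_typ(v|U)|
                          + (1/M) sum_j W_atyp(v|u_j) + E W_atyp(v|U).
   In expectation over the codebook, the first term is at most
   sqrt (E W_typ(v|U)^2 / M) (L1 <= L2 and additivity of the variance of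
   i.i.d. sums), and the other two both have mean E W_atyp(v|U).  Summing over
   v, the atypical means add up to P(A'^c_tau), and
   sqrt (E W_typ(v|U)^2) = Phi_V(v) sqrt (E_{U|V} 2^i 1_A), which yields
   delta'; on A'_tau we have W <= 2^tau Phi_V, whence delta' <= sqrt(2^tau/M)/2. *)

From Stdlib Require Import Reals List Lra Lia FunctionalExtensionality ClassicalEpsilon.
From Coquelicot Require Import Coquelicot.
Open Scope R_scope.

Lemma ssum_Series (a : nat -> R) : ex_series a -> ssum a = Series a.
Proof.
  intros Ha. unfold ssum. destruct excluded_middle_informative as [Hex|Hnex].
  - destruct (constructive_indefinite_description _ Hex) as [l Hl]. simpl.
    symmetry. apply is_series_unique, is_series_Reals, Hl.
  - exfalso. apply Hnex. exists (Series a).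
    apply is_series_Reals, Series_correct, Ha.
Qed.

(* Convergence tests for real series, specialized to [R] so that [apply] unifies. *)
Lemma ex_series_Rle (a b : nat -> R) :
  (forall n, Rabs (a n) <= b n) -> ex_series b -> ex_series a.
Proof. intros Hab Hb. exact (ex_series_le a b Hab Hb). Qed.

Lemma ex_series_Rplus (a b : nat -> R) :
  ex_series a -> ex_series b -> ex_series (fun n => a n + b n).
Proof. intros Ha Hb. exact (ex_series_plus a b Ha Hb). Qed.

Lemma ex_series_Rscal (c : R) (a : nat -> R) :
  ex_series a -> ex_series (fun n => c * a n).
Proof. intros Ha. exact (ex_series_scal_l c a Ha). Qed.

Lemma ex_series_Rext (a b : nat -> R) :
  (forall n, a n = b n) -> ex_series a -> ex_series b.
Proof. intros Hab Ha. exact (ex_series_ext a b Hab Ha). Qed.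

Lemma Series_zero : Series (fun _ => 0) = 0.
Proof.
  rewrite (Series_ext _ (fun _ => 0 * 0)) by (intros; ring).
  rewrite Series_scal_l. ring.
Qed.

Lemma partial_sums_growing (a : nat -> R) :
  (forall n, 0 <= a n) -> Un_growing (sum_f_R0 a).
Proof. intros Ha n. simpl. specialize (Ha (S n)). lra. Qed.

Lemma partial_sum_nonneg (a : nat -> R) N : (forall n, 0 <= a n) -> 0 <= sum_f_R0 a N.
Proof.
  intros Ha. induction N as [|N IH]; simpl; [apply Ha|]. specialize (Ha (S N)). lra.
Qed.

Lemma partial_sum_le_Series (a : nat -> R) N :
  (forall n, 0 <= a n) -> ex_series a -> sum_f_R0 a N <= Series a.
Proof.
  intros Ha [l Hl]. rewrite (is_series_unique a l Hl).
  apply growing_ineq; [apply partial_sums_growing, Ha | apply is_series_Reals, Hl].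
Qed.

Lemma nonneg_series_bounded (a : nat -> R) B :
  (forall n, 0 <= a n) -> (forall N, sum_f_R0 a N <= B) ->
  ex_series a /\ Series a <= B.
Proof.
  intros Ha HB.
  destruct (growing_cv (sum_f_R0 a) (partial_sums_growing a Ha)) as [l Hl].
  { exists B. intros x [i ->]. apply HB. }
  assert (Hs : is_series a l) by (apply is_series_Reals, Hl).
  split; [exists l; exact Hs|].
  rewrite (is_series_unique a l Hs).
  destruct (Rle_dec l B) as [Hle|Hgt]; [exact Hle|exfalso].
  destruct (Hl (l - B)) as [N HN]; [lra|].
  specialize (HN N (le_n _)). specialize (HB N). unfold Rdist in HN.
  apply Rabs_def2 in HN. lra.
Qed.

Lemma Series_term_le (a : nat -> R) n :
  (forall n, 0 <= a n) -> ex_series a -> a n <= Series a.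
Proof.
  intros Ha Hex. apply Rle_trans with (sum_f_R0 a n); [|apply partial_sum_le_Series; auto].
  destruct n as [|n]; simpl; [lra|].
  pose proof (partial_sum_nonneg a n Ha). lra.
Qed.

Lemma Series_nonneg (a : nat -> R) : (forall n, 0 <= a n) -> ex_series a -> 0 <= Series a.
Proof. intros Ha Hex. eapply Rle_trans; [apply Ha|apply (Series_term_le a 0); auto]. Qed.

Lemma Series_zero_terms (a : nat -> R) :
  (forall n, 0 <= a n) -> ex_series a -> Series a = 0 -> forall n, a n = 0.
Proof. intros Ha Hex Hs n. pose proof (Series_term_le a n Ha Hex). specialize (Ha n). lra. Qed.

Lemma Series_mono (a b : nat -> R) :
  (forall n, a n <= b n) -> ex_series a -> ex_series b -> Series a <= Series b.
Proof.
  intros Hab Ha Hb.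
  assert (Hdiff : 0 <= Series (fun n => b n - a n)).
  { apply Series_nonneg; [intros n; specialize (Hab n); lra|exact (ex_series_minus b a Hb Ha)]. }
  rewrite Series_minus in Hdiff by auto. lra.
Qed.

Lemma Series_sum_f_R0 (g : nat -> nat -> R) N :
  (forall k, ex_series (g k)) ->
  ex_series (fun n => sum_f_R0 (fun k => g k n) N) /\
  Series (fun n => sum_f_R0 (fun k => g k n) N) = sum_f_R0 (fun k => Series (g k)) N.
Proof.
  intros Hg. induction N as [|N [IHex IHeq]]; simpl; [split; [apply Hg|reflexivity]|].
  split; [apply ex_series_Rplus; auto|].
  rewrite Series_plus, IHeq; auto.
Qed.

Lemma tonelli (f : nat -> nat -> R) :
  (forall u v, 0 <= f u v) ->
  (forall u, ex_series (f u)) -> ex_series (fun u => Series (f u)) ->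
  (forall v, ex_series (fun u => f u v)) /\
  ex_series (fun v => Series (fun u => f u v)) /\
  Series (fun v => Series (fun u => f u v)) = Series (fun u => Series (f u)).
Proof.
  intros Hf0 Hrow Hsum.
  assert (Hcol : forall v, ex_series (fun u => f u v)).
  { intros v. apply (ex_series_Rle _ (fun u => Series (f u))); auto.
    intros u. rewrite Rabs_pos_eq by auto. apply Series_term_le; auto. }
  assert (Hsw : ex_series (fun v => Series (fun u => f u v)) /\
                Series (fun v => Series (fun u => f u v)) <= Series (fun u => Series (f u))).
  { apply nonneg_series_bounded; [intros v; apply Series_nonneg; auto|].
    intros N. destruct (Series_sum_f_R0 (fun v u => f u v) N Hcol) as [_ <-].
    apply Series_le; auto. intros u.
    split; [apply partial_sum_nonneg; auto|apply partial_sum_le_Series; auto]. }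
  destruct Hsw as [Hex Hle]. do 2 (split; [assumption|]).
  apply Rle_antisym; [exact Hle|].
  apply nonneg_series_bounded; [intros; apply Series_nonneg; auto|].
  intros N. destruct (Series_sum_f_R0 f N Hrow) as [_ <-].
  apply Series_le; auto. intros v.
  split; [apply partial_sum_nonneg; auto|apply partial_sum_le_Series; auto].
Qed.

Definition pmf (p : nat -> R) : Prop := (forall u, 0 <= p u) /\ is_series p 1.

Definition bounded_on (m : nat) (F : list nat -> R) : Prop :=
  exists B, forall l, length l = m -> Rabs (F l) <= B.

Definition fsum (g : nat -> R) (l : list nat) : R := fold_right (fun u acc => g u + acc) 0 l.

Lemma fsum_cons g u l : fsum g (u :: l) = g u + fsum g l.
Proof. reflexivity. Qed.

Lemma fsum_nonneg g l : (forall u, 0 <= g u) -> 0 <= fsum g l.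
Proof.
  intros Hg. induction l as [|u l IH]; [unfold fsum; simpl; lra|].
  rewrite fsum_cons. specialize (Hg u). lra.
Qed.

Lemma fsum_minus_const g c l : fsum (fun u => g u - c) l = fsum g l - INR (length l) * c.
Proof.
  induction l as [|u l IH]; [unfold fsum; simpl; ring|].
  rewrite !fsum_cons, IH. cbn [length]. rewrite S_INR. ring.
Qed.

Lemma fsum_bound g C l : (forall u, Rabs (g u) <= C) -> Rabs (fsum g l) <= INR (length l) * C.
Proof.
  intros Hg. induction l as [|u l IH]; cbn [length].
  - unfold fsum; simpl. rewrite Rabs_R0. lra.
  - rewrite fsum_cons, S_INR. eapply Rle_trans; [apply Rabs_triang|]. specialize (Hg u). lra.
Qed.

Section BoundedFunctions.
Variable m : nat.

Lemma bounded_on_const c : bounded_on m (fun _ => c).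
Proof. exists (Rabs c). intros; lra. Qed.

Lemma bounded_on_plus F G :
  bounded_on m F -> bounded_on m G -> bounded_on m (fun l => F l + G l).
Proof.
  intros [B1 H1] [B2 H2]. exists (B1 + B2). intros l Hl.
  eapply Rle_trans; [apply Rabs_triang|]. specialize (H1 l Hl); specialize (H2 l Hl); lra.
Qed.

Lemma bounded_on_scal F c : bounded_on m F -> bounded_on m (fun l => c * F l).
Proof.
  intros [B HB]. exists (Rabs c * B). intros l Hl. rewrite Rabs_mult.
  apply Rmult_le_compat_l; [apply Rabs_pos|auto].
Qed.

Lemma bounded_on_mult F G :
  bounded_on m F -> bounded_on m G -> bounded_on m (fun l => F l * G l).
Proof.
  intros [B1 H1] [B2 H2]. exists (B1 * B2). intros l Hl. rewrite Rabs_mult.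
  apply Rmult_le_compat; try apply Rabs_pos; auto.
Qed.

Lemma bounded_on_abs F : bounded_on m F -> bounded_on m (fun l => Rabs (F l)).
Proof. intros [B HB]. exists B. intros l Hl. rewrite Rabs_Rabsolu. auto. Qed.

Lemma bounded_on_fsum g C : (forall u, Rabs (g u) <= C) -> bounded_on m (fsum g).
Proof. intros Hg. exists (INR m * C). intros l <-. apply fsum_bound, Hg. Qed.

End BoundedFunctions.

Lemma bounded_on_cons m F u : bounded_on (S m) F -> bounded_on m (fun l => F (u :: l)).
Proof. intros [B HB]. exists B. intros l Hl. apply HB. simpl; auto. Qed.

Section Expectation.
Variable p : nat -> R.
Hypothesis Hp : pmf p.

Lemma pmf_nonneg u : 0 <= p u.
Proof. apply Hp. Qed.

Lemma pmf_ex_series : ex_series p.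
Proof. exists 1. apply Hp. Qed.

Lemma Series_pmf_const c : Series (fun u => c * p u) = c.
Proof.
  rewrite Series_scal_l, (is_series_unique p 1 (proj2 Hp)). ring.
Qed.

Lemma ex_series_pmf_const c : ex_series (fun u => c * p u).
Proof. apply ex_series_Rscal, pmf_ex_series. Qed.

Lemma weighted_ex_series g B : (forall u, Rabs (g u) <= B) -> ex_series (fun u => p u * g u).
Proof.
  intros Hg. apply (ex_series_Rle _ (fun u => B * p u)); [|apply ex_series_pmf_const].
  intros u. rewrite Rabs_mult, Rabs_pos_eq, Rmult_comm by apply pmf_nonneg.
  apply Rmult_le_compat_r; [apply pmf_nonneg|auto].
Qed.

Lemma weighted_Series_bound g B :
  (forall u, Rabs (g u) <= B) -> Rabs (Series (fun u => p u * g u)) <= B.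
Proof.
  intros Hg.
  assert (Hdom : forall u, Rabs (p u * g u) <= B * p u).
  { intros u. rewrite Rabs_mult, Rabs_pos_eq, Rmult_comm by apply pmf_nonneg.
    apply Rmult_le_compat_r; [apply pmf_nonneg|auto]. }
  eapply Rle_trans; [apply Series_Rabs|].
  { apply (ex_series_Rle _ (fun u => B * p u)); [|apply ex_series_pmf_const].
    intros u. rewrite Rabs_Rabsolu; auto. }
  rewrite <- (Series_pmf_const B). apply Series_le; [|apply ex_series_pmf_const].
  intros u; split; [apply Rabs_pos|auto].
Qed.

Lemma weighted_variance_le g B :
  (forall u, Rabs (g u) <= B) ->
  let mu := Series (fun u => p u * g u) in
  Series (fun u => p u * ((g u - mu) * (g u - mu))) <= Series (fun u => p u * (g u * g u)).
Proof.
  intros Hg mu.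
  assert (Eg : ex_series (fun u => p u * g u)) by (apply (weighted_ex_series g B Hg)).
  assert (Eg2 : ex_series (fun u => p u * (g u * g u))).
  { apply (weighted_ex_series _ (B * B)). intros u. rewrite Rabs_mult.
    apply Rmult_le_compat; try apply Rabs_pos; auto. }
  rewrite (Series_ext _ (fun u => (p u * (g u * g u) - (2 * mu) * (p u * g u)) + (mu * mu) * p u))
    by (intros; ring).
  rewrite Series_plus, Series_minus, Series_scal_l, Series_pmf_const.
  - fold mu. pose proof (Rle_0_sqr mu). unfold Rsqr in *. lra.
  - exact Eg2.
  - apply ex_series_Rscal, Eg.
  - exact (ex_series_minus _ _ Eg2 (ex_series_Rscal (2 * mu) _ Eg)).
  - apply ex_series_pmf_const.
Qed.

Lemma weighted_sqrt_le g B :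
  (forall u, 0 <= g u <= B) ->
  Series (fun u => p u * sqrt (g u)) <= sqrt (Series (fun u => p u * g u)).
Proof.
  intros Hg.
  assert (Eg : ex_series (fun u => p u * g u)).
  { apply (weighted_ex_series g B). intros u; rewrite Rabs_pos_eq; apply Hg. }
  assert (Es : ex_series (fun u => p u * sqrt (g u))).
  { apply (weighted_ex_series _ (sqrt B)). intros u.
    rewrite Rabs_pos_eq by apply sqrt_pos. apply sqrt_le_1_alt, Hg. }
  assert (Hpg : forall u, 0 <= p u * g u).
  { intros u. apply Rmult_le_pos; [apply pmf_nonneg|apply Hg]. }
  set (c := Series (fun u => p u * g u)).
  destruct (Req_dec c 0) as [Hc0|Hc0].
  - pose proof (Series_zero_terms _ Hpg Eg Hc0) as Hz.
    rewrite (Series_ext _ (fun _ => 0)), Series_zero; [apply sqrt_pos|].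
    intros u. destruct (Rmult_integral _ _ (Hz u)) as [Z|Z]; rewrite Z; [ring|rewrite sqrt_0; ring].
  - assert (Hc : 0 < c) by (pose proof (Series_nonneg _ Hpg Eg) as Hnn; fold c in Hnn; lra).
    set (s := sqrt c).
    assert (Hs : 0 < s) by (apply sqrt_lt_R0, Hc).
    assert (Hss : s * s = c) by (apply sqrt_sqrt; lra).
    (* tangent-line bound: sqrt x <= x / (2 s) + s / 2 *)
    apply Rle_trans with (Series (fun u => / (2 * s) * (p u * g u) + (s / 2) * p u)).
    + apply Series_mono; auto.
      2: { apply ex_series_Rplus; [apply ex_series_Rscal, Eg|apply ex_series_pmf_const]. }
      intros u. destruct (Hg u) as [G0 _]. pose proof (sqrt_sqrt (g u) G0).
      pose proof (sqrt_pos (g u)). pose proof (pmf_nonneg u).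
      assert (Htan : 2 * s * sqrt (g u) <= g u + s * s).
      { pose proof (Rle_0_sqr (sqrt (g u) - s)). unfold Rsqr in *. nra. }
      apply Rmult_le_reg_l with (2 * s); [lra|].
      replace (2 * s * (/ (2 * s) * (p u * g u) + s / 2 * p u)) with (p u * (g u + s * s))
        by (field; lra).
      replace (2 * s * (p u * sqrt (g u))) with (p u * (2 * s * sqrt (g u))) by ring.
      apply Rmult_le_compat_l; auto.
    + rewrite Series_plus, Series_scal_l, Series_pmf_const.
      * fold c. rewrite <- Hss. right. field. lra.
      * apply ex_series_Rscal, Eg.
      * apply ex_series_pmf_const.
Qed.

Lemma Ecb_bound m F B :
  (forall l, length l = m -> Rabs (F l) <= B) -> Rabs (Ecb p m F) <= B.
Proof.
  revert F. induction m as [|m IH]; intros F HF; [apply HF; reflexivity|].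
  simpl. rewrite ssum_Series.
  - apply weighted_Series_bound. intros u. apply IH. intros l Hl. apply HF. simpl; auto.
  - apply (weighted_ex_series _ B). intros u. apply IH. intros l Hl. apply HF. simpl; auto.
Qed.

Lemma Ecb_cons m F :
  bounded_on (S m) F ->
  ex_series (fun u => p u * Ecb p m (fun l => F (u :: l))) /\
  Ecb p (S m) F = Series (fun u => p u * Ecb p m (fun l => F (u :: l))).
Proof.
  intros [B HB].
  assert (Ex : ex_series (fun u => p u * Ecb p m (fun l => F (u :: l)))).
  { apply (weighted_ex_series _ B). intros u. apply Ecb_bound.
    intros l Hl. apply HB. simpl; auto. }
  split; [exact Ex|apply ssum_Series, Ex].
Qed.

Lemma Ecb_ext m F G : (forall l, length l = m -> F l = G l) -> Ecb p m F = Ecb p m G.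
Proof.
  revert F G. induction m as [|m IH]; intros F G H; [apply H; reflexivity|].
  simpl. f_equal. apply functional_extensionality. intros u. f_equal.
  apply IH. intros l Hl. apply H. simpl; auto.
Qed.

Lemma Ecb_const m c : Ecb p m (fun _ => c) = c.
Proof.
  induction m as [|m IH]; [reflexivity|].
  destruct (Ecb_cons m (fun _ => c) (bounded_on_const _ c)) as [_ ->].
  rewrite IH, (Series_ext _ (fun u => c * p u)) by (intros; ring). apply Series_pmf_const.
Qed.

Lemma Ecb_plus m F G :
  bounded_on m F -> bounded_on m G -> Ecb p m (fun l => F l + G l) = Ecb p m F + Ecb p m G.
Proof.
  revert F G. induction m as [|m IH]; intros F G HF HG; [reflexivity|].
  destruct (Ecb_cons m _ (bounded_on_plus _ _ _ HF HG)) as [_ ->].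
  destruct (Ecb_cons m F HF) as [EF ->]. destruct (Ecb_cons m G HG) as [EG ->].
  rewrite <- Series_plus by auto. apply Series_ext. intros u.
  rewrite IH by (apply bounded_on_cons; auto). ring.
Qed.

Lemma Ecb_scal m F c : bounded_on m F -> Ecb p m (fun l => c * F l) = c * Ecb p m F.
Proof.
  revert F. induction m as [|m IH]; intros F HF; [reflexivity|].
  destruct (Ecb_cons m _ (bounded_on_scal _ F c HF)) as [_ ->].
  destruct (Ecb_cons m F HF) as [EF ->].
  rewrite <- Series_scal_l. apply Series_ext. intros u.
  rewrite IH by (apply bounded_on_cons; auto). ring.
Qed.

Lemma Ecb_mono m F G :
  bounded_on m F -> bounded_on m G -> (forall l, length l = m -> F l <= G l) ->
  Ecb p m F <= Ecb p m G.
Proof.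
  revert F G. induction m as [|m IH]; intros F G HF HG H; [apply H; reflexivity|].
  destruct (Ecb_cons m F HF) as [EF ->]. destruct (Ecb_cons m G HG) as [EG ->].
  apply Series_mono; auto. intros u. apply Rmult_le_compat_l; [apply pmf_nonneg|].
  apply IH; try (apply bounded_on_cons; auto). intros l Hl. apply H. simpl; auto.
Qed.

Lemma Ecb_nonneg m F :
  bounded_on m F -> (forall l, length l = m -> 0 <= F l) -> 0 <= Ecb p m F.
Proof.
  intros HF H. rewrite <- (Ecb_const m 0). apply Ecb_mono; auto. apply bounded_on_const.
Qed.

Lemma Ecb_fsum m g C :
  (forall u, Rabs (g u) <= C) -> Ecb p m (fun l => fsum g l) = INR m * Series (fun u => p u * g u).
Proof.
  intros Hg. induction m as [|m IH]; [simpl; unfold fsum; simpl; ring|].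
  destruct (Ecb_cons m (fun l => fsum g l) (bounded_on_fsum _ g C Hg)) as [_ ->].
  rewrite (Series_ext _ (fun u => p u * g u + (INR m * Series (fun u => p u * g u)) * p u)).
  - rewrite Series_plus, Series_pmf_const, S_INR; [ring| |apply ex_series_pmf_const].
    apply (weighted_ex_series g C Hg).
  - intros u. rewrite (Ecb_ext m _ (fun l => g u + fsum g l)) by reflexivity.
    rewrite (Ecb_plus m (fun _ => g u) (fun l => fsum g l)), Ecb_const, IH;
      [ring|apply bounded_on_const|apply (bounded_on_fsum _ g C Hg)].
Qed.

Lemma Ecb_fsum_centred_sq m g C :
  (forall u, Rabs (g u) <= C) -> Series (fun u => p u * g u) = 0 ->
  Ecb p m (fun l => fsum g l * fsum g l) = INR m * Series (fun u => p u * (g u * g u)).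
Proof.
  intros Hg Hg0.
  assert (HS : forall k, bounded_on k (fsum g)) by (intros k; apply (bounded_on_fsum k g C Hg)).
  assert (Hg2 : forall u, Rabs (g u * g u) <= C * C).
  { intros u. rewrite Rabs_mult. apply Rmult_le_compat; try apply Rabs_pos; auto. }
  induction m as [|m IH]; [simpl; unfold fsum; simpl; ring|].
  destruct (Ecb_cons m _ (bounded_on_mult _ _ _ (HS _) (HS _))) as [_ ->].
  rewrite (Series_ext _ (fun u => p u * (g u * g u)
                                  + (INR m * Series (fun u => p u * (g u * g u))) * p u)).
  - rewrite Series_plus, Series_pmf_const, S_INR; [ring| |apply ex_series_pmf_const].
    apply (weighted_ex_series _ _ Hg2).
  - intros u.
    rewrite (Ecb_ext m _ (fun l => g u * g u + ((2 * g u) * fsum g l + fsum g l * fsum g l)))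
      by (intros l _; rewrite fsum_cons; ring).
    rewrite (Ecb_plus m (fun _ => g u * g u) (fun l => 2 * g u * fsum g l + fsum g l * fsum g l)),
      (Ecb_plus m (fun l => 2 * g u * fsum g l) (fun l => fsum g l * fsum g l)),
      (Ecb_scal m (fun l => fsum g l)), Ecb_const, IH, (Ecb_fsum m g C Hg), Hg0; [ring|..];
      auto using bounded_on_const, bounded_on_plus, bounded_on_scal, bounded_on_mult.
Qed.

Lemma Ecb_sqrt m G :
  bounded_on m G -> (forall l, length l = m -> 0 <= G l) ->
  Ecb p m (fun l => sqrt (G l)) <= sqrt (Ecb p m G).
Proof.
  revert G. induction m as [|m IH]; intros G HG H0; [simpl; lra|].
  destruct HG as [B HB].
  assert (HGu : forall u, bounded_on m (fun l => G (u :: l))).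
  { intros u. apply bounded_on_cons. exists B; auto. }
  assert (Hsqrt : bounded_on (S m) (fun l => sqrt (G l))).
  { exists (sqrt B). intros l Hl. rewrite Rabs_pos_eq by apply sqrt_pos.
    apply sqrt_le_1_alt. eapply Rle_trans; [apply Rle_abs|auto]. }
  assert (Hg : forall u, 0 <= Ecb p m (fun l => G (u :: l)) <= B).
  { intros u. split.
    - apply Ecb_nonneg; auto. intros l Hl; apply H0; simpl; auto.
    - eapply Rle_trans; [apply Rle_abs|]. apply Ecb_bound. intros l Hl; apply HB; simpl; auto. }
  destruct (Ecb_cons m _ Hsqrt) as [Es ->].
  destruct (Ecb_cons m G (ex_intro _ B HB)) as [_ ->].
  eapply Rle_trans; [|apply (weighted_sqrt_le _ B Hg)].
  apply Series_mono; auto.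
  - intros u. apply Rmult_le_compat_l; [apply pmf_nonneg|]. apply IH; auto.
    intros l Hl; apply H0; simpl; auto.
  - apply (weighted_ex_series _ (sqrt B)). intros u. rewrite Rabs_pos_eq by apply sqrt_pos.
    apply sqrt_le_1_alt, Hg.
Qed.

(* Weak law of large numbers in L1, from the L2 bound:
   E | (1/m) sum_j Y(u_j) - E Y | <= sqrt (E Y^2 / m). *)
Lemma Ecb_mean_deviation m Y C :
  (1 <= m)%nat -> (forall u, Rabs (Y u) <= C) ->
  Ecb p m (fun l => Rabs (/ INR m * fsum Y l - Series (fun u => p u * Y u)))
  <= sqrt (Series (fun u => p u * (Y u * Y u))) / sqrt (INR m).
Proof.
  intros Hm HY. assert (Hm' : 0 < INR m) by (apply lt_0_INR; lia).
  set (mu := Series (fun u => p u * Y u)).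
  assert (Hmu : Rabs mu <= C) by (apply weighted_Series_bound, HY).
  set (g := fun u => Y u - mu).
  assert (Hg : forall u, Rabs (g u) <= C + C).
  { intros u. unfold g, Rminus. eapply Rle_trans; [apply Rabs_triang|].
    rewrite Rabs_Ropp. specialize (HY u). lra. }
  assert (Hg0 : Series (fun u => p u * g u) = 0).
  { unfold g. rewrite (Series_ext _ (fun u => p u * Y u - mu * p u)) by (intros; ring).
    rewrite Series_minus, Series_pmf_const; [fold mu; ring| |apply ex_series_pmf_const].
    apply (weighted_ex_series _ _ HY). }
  assert (Hfs : bounded_on m (fsum g)) by (apply (bounded_on_fsum m g _ Hg)).
  rewrite (Ecb_ext m _ (fun l => sqrt ((/ INR m * / INR m) * (fsum g l * fsum g l)))).
  2: { intros l Hl. unfold g. rewrite fsum_minus_const, Hl, <- sqrt_Rsqr_abs.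
       f_equal. unfold Rsqr. field. lra. }
  eapply Rle_trans; [apply Ecb_sqrt|].
  - apply bounded_on_scal, bounded_on_mult; auto.
  - intros l _. apply Rmult_le_pos; [|apply Rle_0_sqr].
    apply Rlt_le, Rmult_lt_0_compat; apply Rinv_0_lt_compat; auto.
  - rewrite Ecb_scal, (Ecb_fsum_centred_sq m g _ Hg Hg0) by (apply bounded_on_mult; auto).
    rewrite <- sqrt_div_alt by auto. apply sqrt_le_1_alt.
    pose proof (weighted_variance_le Y C HY) as Hvar. fold mu in Hvar. fold g in Hvar.
    replace (/ INR m * / INR m * (INR m * Series (fun u => p u * (g u * g u))))
      with (Series (fun u => p u * (g u * g u)) / INR m) by (field; lra).
    unfold Rdiv. apply Rmult_le_compat_r; [apply Rlt_le, Rinv_0_lt_compat; auto|exact Hvar].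
Qed.

Lemma Ecb_Series m (F : list nat -> nat -> R) B :
  (forall l, length l = m -> forall v, 0 <= F l v) ->
  (forall l, length l = m -> ex_series (F l)) ->
  (forall l, length l = m -> Series (F l) <= B) ->
  ex_series (fun v => Ecb p m (fun l => F l v)) /\
  Series (fun v => Ecb p m (fun l => F l v)) = Ecb p m (fun l => Series (F l)).
Proof.
  revert F. induction m as [|m IH]; intros F H0 Hex HB; [split; [apply Hex|]; reflexivity|].
  assert (Hterm : forall l, length l = S m -> forall v, Rabs (F l v) <= B).
  { intros l Hl v. rewrite Rabs_pos_eq by auto.
    eapply Rle_trans; [apply Series_term_le|]; auto. }
  assert (Hsum : bounded_on (S m) (fun l => Series (F l))).
  { exists B. intros l Hl. rewrite Rabs_pos_eq by (apply Series_nonneg; auto). auto. }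
  assert (IHu : forall u, ex_series (fun v => Ecb p m (fun l => F (u :: l) v)) /\
       Series (fun v => Ecb p m (fun l => F (u :: l) v)) = Ecb p m (fun l => Series (F (u :: l)))).
  { intros u. apply IH; intros l Hl; [apply H0|apply Hex|apply HB]; simpl; auto. }
  set (f := fun u v => p u * Ecb p m (fun l => F (u :: l) v)).
  assert (Hf0 : forall u v, 0 <= f u v).
  { intros u v. apply Rmult_le_pos; [apply pmf_nonneg|]. apply Ecb_nonneg.
    - exists B. intros l Hl. apply Hterm. simpl; auto.
    - intros l Hl. apply H0. simpl; auto. }
  assert (Hrow : forall u, Series (f u) = p u * Ecb p m (fun l => Series (F (u :: l)))).
  { intros u. unfold f. rewrite Series_scal_l. f_equal. apply IHu. }
  destruct (Ecb_cons m _ Hsum) as [Esum Hsum_eq].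
  destruct (tonelli f Hf0) as [Hcol [Ecol Hswap]].
  - intros u. apply ex_series_Rscal, IHu.
  - exact (ex_series_Rext _ _ (fun u => eq_sym (Hrow u)) Esum).
  - assert (Hv : forall v, Ecb p (S m) (fun l => F l v) = Series (fun u => f u v)).
    { intros v. simpl. apply ssum_Series, Hcol. }
    rewrite (Series_ext _ _ Hv), Hswap, Hsum_eq, (Series_ext _ _ Hrow).
    split; [|reflexivity]. exact (ex_series_Rext _ _ (fun v => eq_sym (Hv v)) Ecol).
Qed.

End Expectation.

Lemma indic_split b : indic b + indic (negb b) = 1.
Proof. destruct b; simpl; lra. Qed.

Lemma indic_range b : 0 <= indic b <= 1.
Proof. destruct b; simpl; lra. Qed.

Lemma indic_idem b : indic b * indic b = indic b.
Proof. destruct b; simpl; ring. Qed.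

Lemma Rpower_log2 x : 0 < x -> Rpower 2 (log2 x) = x.
Proof.
  intros Hx. unfold Rpower, log2.
  assert (0 < ln 2) by (rewrite <- ln_1; apply ln_increasing; lra).
  replace (ln x / ln 2 * ln 2) with (ln x) by (field; lra). apply exp_ln, Hx.
Qed.

Lemma abs_sub_le a b : 0 <= a -> 0 <= b -> Rabs (a - b) <= a + b.
Proof. intros. unfold Rabs. destruct Rcase_abs; lra. Qed.

Section Channel.
Variables (PU : nat -> R) (W : nat -> nat -> R) (tau : R).
Hypothesis HPU : pmf PU.
Hypothesis HW0 : forall u v, 0 <= W u v.
Hypothesis HW1 : forall u, is_series (W u) 1.

Lemma W_ex_series u : ex_series (W u).
Proof. exists 1. apply HW1. Qed.

Lemma W_le_1 u v : 0 <= W u v <= 1.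
Proof.
  split; [apply HW0|]. rewrite <- (is_series_unique _ _ (HW1 u)).
  apply Series_term_le; [apply HW0|apply W_ex_series].
Qed.

Lemma outdist_Series v :
  ex_series (fun u => PU u * W u v) /\ outdist PU W v = Series (fun u => PU u * W u v).
Proof.
  assert (Ex : ex_series (fun u => PU u * W u v)).
  { apply (weighted_ex_series PU HPU _ 1). intros u.
    destruct (W_le_1 u v). rewrite Rabs_pos_eq; lra. }
  split; [exact Ex|apply ssum_Series, Ex].
Qed.

Lemma joint_nonneg u v : 0 <= PU u * W u v.
Proof. apply Rmult_le_pos; [apply (pmf_nonneg PU HPU)|apply HW0]. Qed.

Lemma outdist_nonneg v : 0 <= outdist PU W v.
Proof.
  destruct (outdist_Series v) as [Ex ->]. apply Series_nonneg; auto using joint_nonneg.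
Qed.

Lemma outdist_sum : ex_series (outdist PU W) /\ Series (outdist PU W) = 1.
Proof.
  set (f := fun u v => PU u * W u v).
  assert (Hrow : forall u, Series (f u) = PU u).
  { intros u. unfold f. rewrite Series_scal_l, (is_series_unique _ _ (HW1 u)). ring. }
  destruct (tonelli f joint_nonneg) as [_ [Ecol Hswap]].
  - intros u. apply ex_series_Rscal, W_ex_series.
  - exact (ex_series_Rext _ _ (fun u => eq_sym (Hrow u)) (pmf_ex_series PU HPU)).
  - assert (Hv : forall v, Series (fun u => f u v) = outdist PU W v).
    { intros v. symmetry. apply outdist_Series. }
    split; [exact (ex_series_Rext _ _ Hv Ecol)|].
    rewrite <- (Series_ext _ _ Hv), Hswap, (Series_ext _ _ Hrow).
    apply is_series_unique, HPU.
Qed.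

Lemma Rpower_info u v :
  PU u * W u v <> 0 ->
  0 < outdist PU W v /\ Rpower 2 (info PU W u v) = W u v / outdist PU W v.
Proof.
  intros Hne.
  assert (Hjoint : 0 < PU u * W u v) by (pose proof (joint_nonneg u v); lra).
  assert (Hp : 0 < PU u).
  { pose proof (pmf_nonneg PU HPU u). destruct (Req_dec (PU u) 0) as [E|]; [|lra].
    rewrite E in Hne. lra. }
  assert (Hq : 0 < outdist PU W v).
  { destruct (outdist_Series v) as [Ex ->]. eapply Rlt_le_trans; [exact Hjoint|].
    apply (Series_term_le (fun u => PU u * W u v)); auto using joint_nonneg. }
  split; [exact Hq|]. unfold info.
  replace (PU u * W u v / (PU u * outdist PU W v)) with (W u v / outdist PU W v)
    by (field; lra).
  apply Rpower_log2, Rdiv_lt_0_compat; [pose proof (W_le_1 u v); nra|exact Hq].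
Qed.

Definition W_typ (v u : nat) : R := W u v * indic (leRb (info PU W u v) tau).
Definition W_atyp (v u : nat) : R := W u v * indic (negb (leRb (info PU W u v) tau)).

Lemma W_typ_range v u : 0 <= W_typ v u <= 1.
Proof.
  unfold W_typ. pose proof (W_le_1 u v).
  pose proof (indic_range (leRb (info PU W u v) tau)). nra.
Qed.

Lemma W_atyp_range v u : 0 <= W_atyp v u <= 1.
Proof.
  unfold W_atyp. pose proof (W_le_1 u v).
  pose proof (indic_range (negb (leRb (info PU W u v) tau))). nra.
Qed.

Lemma W_typ_abs v u : Rabs (W_typ v u) <= 1.
Proof. pose proof (W_typ_range v u). rewrite Rabs_pos_eq; lra. Qed.

Lemma W_atyp_abs v u : Rabs (W_atyp v u) <= 1.
Proof. pose proof (W_atyp_range v u). rewrite Rabs_pos_eq; lra. Qed.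

Lemma W_split v u : W_typ v u + W_atyp v u = W u v.
Proof. unfold W_typ, W_atyp. rewrite <- Rmult_plus_distr_l, indic_split. ring. Qed.

Lemma fsum_W_split v l :
  fsum (fun u => W u v) l = fsum (W_typ v) l + fsum (W_atyp v) l.
Proof.
  induction l as [|u l IH]; [unfold fsum; simpl; ring|].
  rewrite !fsum_cons, IH, <- W_split. ring.
Qed.

Definition mean_typ (v : nat) : R := Series (fun u => PU u * W_typ v u).
Definition mean_atyp (v : nat) : R := Series (fun u => PU u * W_atyp v u).
Definition moment2_typ (v : nat) : R := Series (fun u => PU u * (W_typ v u * W_typ v u)).

Lemma mean_typ_nonneg v : 0 <= mean_typ v.
Proof.
  apply Series_nonneg; [|apply (weighted_ex_series PU HPU _ 1 (W_typ_abs v))].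
  intros u. apply Rmult_le_pos; [apply (pmf_nonneg PU HPU)|apply W_typ_range].
Qed.

Lemma mean_atyp_nonneg v : 0 <= mean_atyp v.
Proof.
  apply Series_nonneg; [|apply (weighted_ex_series PU HPU _ 1 (W_atyp_abs v))].
  intros u. apply Rmult_le_pos; [apply (pmf_nonneg PU HPU)|apply W_atyp_range].
Qed.

Lemma mean_split v : mean_typ v + mean_atyp v = outdist PU W v.
Proof.
  unfold mean_typ, mean_atyp.
  rewrite <- Series_plus by (apply (weighted_ex_series PU HPU _ 1);
                             first [apply W_typ_abs|apply W_atyp_abs]).
  destruct (outdist_Series v) as [_ ->]. apply Series_ext. intros u.
  rewrite <- W_split. ring.
Qed.

Lemma mean_atyp_sum : ex_series mean_atyp /\ Series mean_atyp = prob_Ac PU W tau.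
Proof.
  set (f := fun u v => PU u * W u v * indic (negb (leRb (info PU W u v) tau))).
  assert (Hf : forall u v, 0 <= f u v <= PU u * W u v).
  { intros u v. unfold f. pose proof (joint_nonneg u v).
    pose proof (indic_range (negb (leRb (info PU W u v) tau))). nra. }
  assert (Hrow_ex : forall u, ex_series (f u)).
  { intros u. apply (ex_series_Rle _ (fun v => PU u * W u v)).
    - intros v. rewrite Rabs_pos_eq; apply Hf.
    - apply ex_series_Rscal, W_ex_series. }
  assert (Hrow_le : forall u, Series (f u) <= PU u).
  { intros u. eapply Rle_trans; [apply (Series_le _ (fun v => PU u * W u v)); auto|].
    - apply ex_series_Rscal, W_ex_series.
    - rewrite Series_scal_l, (is_series_unique _ _ (HW1 u)). lra. }
  assert (Hsum_ex : ex_series (fun u => Series (f u))).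
  { apply (ex_series_Rle _ PU); [|apply (pmf_ex_series PU HPU)].
    intros u. rewrite Rabs_pos_eq; [auto|apply Series_nonneg; [apply Hf|auto]]. }
  destruct (tonelli f (fun u v => proj1 (Hf u v)) Hrow_ex Hsum_ex) as [_ [Ecol Hswap]].
  assert (Hv : forall v, Series (fun u => f u v) = mean_atyp v).
  { intros v. unfold mean_atyp, W_atyp. apply Series_ext. intros u. unfold f. ring. }
  split; [exact (ex_series_Rext _ _ Hv Ecol)|].
  rewrite <- (Series_ext _ _ Hv), Hswap. unfold prob_Ac.
  replace (fun u => ssum (fun v => PU u * W u v * indic (negb (leRb (info PU W u v) tau))))
    with (fun u => Series (f u))
    by (apply functional_extensionality; intros u; symmetry; apply ssum_Series, Hrow_ex).
  symmetry. apply ssum_Series, Hsum_ex.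
Qed.

(* On the typical set Phi_{V|U}(v|u) <= 2^tau Phi_V(v), hence E[W_typ^2] <= 2^tau Phi_V(v)^2. *)
Lemma moment2_term_le u v :
  PU u * (W_typ v u * W_typ v u) <= (Rpower 2 tau * outdist PU W v) * (PU u * W u v).
Proof.
  pose proof (joint_nonneg u v) as Hj. pose proof (outdist_nonneg v).
  assert (H2 : 0 < Rpower 2 tau) by (unfold Rpower; apply exp_pos).
  pose proof (W_le_1 u v). unfold W_typ, indic, leRb.
  destruct (Rle_dec (info PU W u v) tau) as [Htyp|]; cbv iota;
    [|apply Rle_trans with 0; [right; ring|apply Rmult_le_pos; nra]].
  destruct (Req_dec (PU u * W u v) 0) as [Z|Z].
  - replace (PU u * (W u v * 1 * (W u v * 1))) with (PU u * W u v * W u v) by ring.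
    rewrite Z. nra.
  - destruct (Rpower_info u v Z) as [Hq Hi].
    assert (HW : W u v <= Rpower 2 tau * outdist PU W v).
    { apply Rmult_le_reg_r with (/ outdist PU W v); [apply Rinv_0_lt_compat, Hq|].
      replace (Rpower 2 tau * outdist PU W v * / outdist PU W v) with (Rpower 2 tau)
        by (field; lra).
      change (W u v / outdist PU W v <= Rpower 2 tau).
      rewrite <- Hi. apply Rle_Rpower; lra. }
    nra.
Qed.

Lemma moment2_typ_le v : moment2_typ v <= Rpower 2 tau * (outdist PU W v * outdist PU W v).
Proof.
  destruct (outdist_Series v) as [Ex Hq].
  apply Rle_trans with (Series (fun u => (Rpower 2 tau * outdist PU W v) * (PU u * W u v))).
  - apply Series_le; [|apply ex_series_Rscal, Ex]. intros u. split; [|apply moment2_term_le].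
    apply Rmult_le_pos; [apply (pmf_nonneg PU HPU)|apply Rle_0_sqr].
  - rewrite Series_scal_l, <- Hq. lra.
Qed.

Lemma posterior_term u v :
  0 < outdist PU W v ->
  PU u * W u v / outdist PU W v * Rpower 2 (info PU W u v) * indic (leRb (info PU W u v) tau)
  = / (outdist PU W v * outdist PU W v) * (PU u * (W_typ v u * W_typ v u)).
Proof.
  intros Hq. unfold W_typ. set (a := indic (leRb (info PU W u v) tau)).
  replace (PU u * (W u v * a * (W u v * a))) with (PU u * W u v * W u v * (a * a)) by ring.
  unfold a. rewrite indic_idem. fold a.
  destruct (Req_dec (PU u * W u v) 0) as [Z|Z].
  - rewrite Z. unfold Rdiv. ring.
  - rewrite (proj2 (Rpower_info u v Z)). field. lra.
Qed.

Lemma delta'_summand v :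
  outdist PU W v * sqrt (ssum (fun u => (PU u * W u v / outdist PU W v)
                         * Rpower 2 (info PU W u v)
                         * indic (leRb (info PU W u v) tau))) = sqrt (moment2_typ v).
Proof.
  destruct (outdist_Series v) as [Ex Hq].
  assert (Em : ex_series (fun u => PU u * (W_typ v u * W_typ v u))).
  { apply (weighted_ex_series PU HPU _ 1). intros u. rewrite Rabs_mult.
    pose proof (W_typ_abs v u). pose proof (Rabs_pos (W_typ v u)). nra. }
  destruct (Req_dec (outdist PU W v) 0) as [Z|Z].
  - rewrite Z. rewrite Hq in Z.
    pose proof (Series_zero_terms _ (fun u => joint_nonneg u v) Ex Z) as Hz.
    unfold moment2_typ. rewrite (Series_ext _ (fun _ => 0)), Series_zero, sqrt_0; [ring|].
    intros u. unfold W_typ. set (a := indic (leRb (info PU W u v) tau)).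
    replace (PU u * (W u v * a * (W u v * a))) with ((PU u * W u v) * (W u v * a * a)) by ring.
    rewrite Hz. ring.
  - assert (Hq' : 0 < outdist PU W v) by (pose proof (outdist_nonneg v); lra).
    rewrite ssum_Series.
    2: { refine (ex_series_Rext _ _ _ (ex_series_Rscal _ _ Em)).
         intros u. symmetry. apply posterior_term, Hq'. }
    rewrite (Series_ext _ _ (fun u => posterior_term u v Hq')), Series_scal_l.
    fold (moment2_typ v).
    rewrite sqrt_mult_alt by (apply Rlt_le, Rinv_0_lt_compat; nra).
    rewrite Rinv_mult, sqrt_square by (apply Rlt_le, Rinv_0_lt_compat; lra).
    field. lra.
Qed.

Lemma sqrt_moment2_le v : sqrt (moment2_typ v) <= sqrt (Rpower 2 tau) * outdist PU W v.
Proof.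
  eapply Rle_trans; [apply sqrt_le_1_alt, moment2_typ_le|].
  assert (0 < Rpower 2 tau) by (unfold Rpower; apply exp_pos).
  rewrite sqrt_mult_alt, sqrt_square by (auto using outdist_nonneg; lra). lra.
Qed.

Lemma delta'_Series M :
  ex_series (fun v => sqrt (moment2_typ v)) /\
  delta' PU W M tau = / (2 * sqrt (INR M)) * Series (fun v => sqrt (moment2_typ v)) /\
  Series (fun v => sqrt (moment2_typ v)) <= sqrt (Rpower 2 tau).
Proof.
  destruct outdist_sum as [Eq Sq].
  assert (Hdom : forall v, 0 <= sqrt (moment2_typ v) <= sqrt (Rpower 2 tau) * outdist PU W v).
  { intros v. split; [apply sqrt_pos|apply sqrt_moment2_le]. }
  assert (E : ex_series (fun v => sqrt (moment2_typ v))).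
  { apply (ex_series_Rle _ (fun v => sqrt (Rpower 2 tau) * outdist PU W v)).
    - intros v. rewrite Rabs_pos_eq; apply Hdom.
    - apply ex_series_Rscal, Eq. }
  split; [exact E|split].
  - unfold delta'. f_equal.
    rewrite (functional_extensionality _ (fun v => sqrt (moment2_typ v))) by apply delta'_summand.
    apply ssum_Series, E.
  - eapply Rle_trans; [apply (Series_le _ (fun v => sqrt (Rpower 2 tau) * outdist PU W v)); auto|].
    + apply ex_series_Rscal, Eq.
    + rewrite Series_scal_l, Sq. lra.
Qed.

Lemma delta'_le M :
  (1 <= M)%nat -> delta' PU W M tau <= / 2 * sqrt (Rpower 2 tau / INR M).
Proof.
  intros HM. destruct (delta'_Series M) as [_ [-> Hle]].
  assert (HM' : 0 < INR M) by (apply lt_0_INR; lia).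
  assert (Hs : 0 < sqrt (INR M)) by (apply sqrt_lt_R0, HM').
  rewrite sqrt_div_alt by exact HM'.
  replace (/ 2 * (sqrt (Rpower 2 tau) / sqrt (INR M)))
    with (/ (2 * sqrt (INR M)) * sqrt (Rpower 2 tau)) by (field; lra).
  apply Rmult_le_compat_l; [apply Rlt_le, Rinv_0_lt_compat; lra|exact Hle].
Qed.

Lemma Series_fsum_W l :
  ex_series (fun v => fsum (fun u => W u v) l) /\
  Series (fun v => fsum (fun u => W u v) l) = INR (length l).
Proof.
  induction l as [|u l [IHex IHeq]].
  - assert (Hz : forall v, 0 * W 0%nat v = fsum (fun u => W u v) nil)
      by (intros; unfold fsum; simpl; ring).
    split; [exact (ex_series_Rext _ _ Hz (ex_series_Rscal 0 _ (W_ex_series 0)))|].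
    rewrite <- (Series_ext _ _ Hz), Series_scal_l. simpl. ring.
  - assert (E : forall v, W u v + fsum (fun u => W u v) l = fsum (fun u => W u v) (u :: l))
      by reflexivity.
    assert (Ex := ex_series_Rplus _ _ (W_ex_series u) IHex).
    split; [exact (ex_series_Rext _ _ E Ex)|].
    rewrite <- (Series_ext _ _ E), Series_plus, IHeq, (is_series_unique _ _ (HW1 u));
      [|apply W_ex_series|exact IHex].
    cbn [length]. rewrite S_INR. ring.
Qed.

(* Pointwise dominating function for |P_V - Q_V| on a codebook of size M:
   the deviation of the typical empirical mean, plus both atypical means. *)
Definition dev_bound (M : nat) (l : list nat) (v : nat) : R :=
  Rabs (/ INR M * fsum (W_typ v) l - mean_typ v) + / INR M * fsum (W_atyp v) l + mean_atyp v.

Section Codebook.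
Variables (M : nat) (l : list nat).
Hypothesis HM : (1 <= M)%nat.
Hypothesis Hl : length l = M.

Lemma inv_M_pos : 0 < / INR M.
Proof. apply Rinv_0_lt_compat, lt_0_INR. lia. Qed.

Lemma fsum_typ_scaled_nonneg v : 0 <= / INR M * fsum (W_typ v) l.
Proof.
  apply Rmult_le_pos; [apply Rlt_le, inv_M_pos|].
  apply fsum_nonneg. intros u; apply W_typ_range.
Qed.

Lemma fsum_atyp_scaled_nonneg v : 0 <= / INR M * fsum (W_atyp v) l.
Proof.
  apply Rmult_le_pos; [apply Rlt_le, inv_M_pos|].
  apply fsum_nonneg. intros u; apply W_atyp_range.
Qed.

(* Triangle inequality after splitting W into typical and atypical parts. *)
Lemma codebook_out_dev_le v :
  Rabs (codebook_out W l v - outdist PU W v) <= dev_bound M l v.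
Proof.
  change (Rabs (/ INR (length l) * fsum (fun u => W u v) l - outdist PU W v) <= dev_bound M l v).
  rewrite Hl, fsum_W_split, <- mean_split. unfold dev_bound.
  replace (/ INR M * (fsum (W_typ v) l + fsum (W_atyp v) l) - (mean_typ v + mean_atyp v))
    with ((/ INR M * fsum (W_typ v) l - mean_typ v) + (/ INR M * fsum (W_atyp v) l - mean_atyp v))
    by ring.
  eapply Rle_trans; [apply Rabs_triang|].
  pose proof (abs_sub_le _ _ (fsum_atyp_scaled_nonneg v) (mean_atyp_nonneg v)). lra.
Qed.

Lemma dev_bound_range v :
  0 <= dev_bound M l v <= / INR M * fsum (fun u => W u v) l + outdist PU W v.
Proof.
  unfold dev_bound. rewrite fsum_W_split, <- mean_split.
  pose proof (abs_sub_le _ _ (fsum_typ_scaled_nonneg v) (mean_typ_nonneg v)).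
  pose proof (Rabs_pos (/ INR M * fsum (W_typ v) l - mean_typ v)).
  pose proof (fsum_atyp_scaled_nonneg v). pose proof (mean_atyp_nonneg v). split; lra.
Qed.

Lemma dev_bound_Series : ex_series (dev_bound M l) /\ Series (dev_bound M l) <= 2.
Proof.
  destruct (Series_fsum_W l) as [Ef Sf]. destruct outdist_sum as [Eq Sq].
  assert (Edom := ex_series_Rplus _ _ (ex_series_Rscal (/ INR M) _ Ef) Eq).
  assert (Ex : ex_series (dev_bound M l)).
  { refine (ex_series_Rle _ _ _ Edom). intros v.
    destruct (dev_bound_range v). rewrite Rabs_pos_eq; auto. }
  split; [exact Ex|].
  eapply Rle_trans; [apply (Series_le _ _ dev_bound_range Edom)|].
  rewrite Series_plus, Series_scal_l, Sf, Sq, Hl; [|apply ex_series_Rscal, Ef|exact Eq].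
  assert (HM' : 0 < INR M) by (apply lt_0_INR; lia). right. field. lra.
Qed.

End Codebook.

Lemma tv_le_dev_bound M l :
  (1 <= M)%nat -> length l = M ->
  0 <= tv (codebook_out W l) (outdist PU W) <= / 2 * Series (dev_bound M l).
Proof.
  intros HM Hl. destruct (dev_bound_Series M l HM Hl) as [Ed _].
  assert (Hdom : forall v, 0 <= Rabs (codebook_out W l v - outdist PU W v) <= dev_bound M l v)
    by (intros v; split; [apply Rabs_pos|apply codebook_out_dev_le; auto]).
  assert (Ea : ex_series (fun v => Rabs (codebook_out W l v - outdist PU W v))).
  { refine (ex_series_Rle _ _ _ Ed).
    intros v. rewrite Rabs_Rabsolu. apply Hdom. }
  unfold tv. rewrite ssum_Series by exact Ea. split.
  - apply Rmult_le_pos; [lra|apply Series_nonneg; [apply Hdom|exact Ea]].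
  - apply Rmult_le_compat_l; [lra|apply Series_le; auto].
Qed.

Lemma dev_bound_bounded M l v :
  (1 <= M)%nat -> length l = M -> Rabs (dev_bound M l v) <= 2.
Proof.
  intros HM Hl. destruct (dev_bound_Series M l HM Hl) as [Ed Sd].
  assert (Hnn : forall v, 0 <= dev_bound M l v) by (intros; apply dev_bound_range; auto).
  rewrite Rabs_pos_eq by apply Hnn.
  eapply Rle_trans; [apply Series_term_le|]; eauto.
Qed.

Lemma Ecb_dev_bound M v :
  (1 <= M)%nat ->
  Ecb PU M (fun l => dev_bound M l v)
  <= / sqrt (INR M) * sqrt (moment2_typ v) + 2 * mean_atyp v.
Proof.
  intros HM. assert (HM' : 0 < INR M) by (apply lt_0_INR; lia).
  set (dev := fun l => Rabs (/ INR M * fsum (W_typ v) l - mean_typ v)).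
  assert (Bdev : bounded_on M dev).
  { apply bounded_on_abs. unfold Rminus.
    apply bounded_on_plus; [apply bounded_on_scal|apply bounded_on_const].
    apply (bounded_on_fsum _ _ 1 (W_typ_abs v)). }
  assert (Batyp : bounded_on M (fun l => fsum (W_atyp v) l))
    by apply (bounded_on_fsum _ _ 1 (W_atyp_abs v)).
  change (Ecb PU M (fun l => dev l + / INR M * fsum (W_atyp v) l + mean_atyp v)
          <= / sqrt (INR M) * sqrt (moment2_typ v) + 2 * mean_atyp v).
  rewrite
    (Ecb_plus PU HPU M (fun l => dev l + / INR M * fsum (W_atyp v) l) (fun _ => mean_atyp v)),
    (Ecb_plus PU HPU M dev (fun l => / INR M * fsum (W_atyp v) l)),
    (Ecb_scal PU HPU M (fun l => fsum (W_atyp v) l)), Ecb_const,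
    (Ecb_fsum PU HPU M _ 1 (W_atyp_abs v));
    auto using bounded_on_plus, bounded_on_scal, bounded_on_const.
  fold (mean_atyp v).
  pose proof (Ecb_mean_deviation PU HPU M (W_typ v) 1 HM (W_typ_abs v)) as Hdev.
  fold (mean_typ v) (moment2_typ v) in Hdev. fold dev in Hdev.
  unfold Rdiv in Hdev. rewrite Rmult_comm in Hdev.
  replace (/ INR M * (INR M * mean_atyp v)) with (mean_atyp v) by (field; lra). lra.
Qed.

Lemma expected_tv_le M :
  (1 <= M)%nat ->
  Ecb PU M (fun l => tv (codebook_out W l) (outdist PU W))
  <= prob_Ac PU W tau + delta' PU W M tau.
Proof.
  intros HM. assert (HM' : 0 < INR M) by (apply lt_0_INR; lia).
  assert (Hs : 0 < sqrt (INR M)) by (apply sqrt_lt_R0, HM').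
  assert (Bdev : bounded_on M (fun l => Series (dev_bound M l))).
  { exists 2. intros l Hl. destruct (dev_bound_Series M l HM Hl) as [Ed Sd].
    rewrite Rabs_pos_eq; [exact Sd|].
    apply Series_nonneg; [intros; apply dev_bound_range|]; auto. }
  eapply Rle_trans.
  { apply (Ecb_mono PU HPU M _ (fun l => / 2 * Series (dev_bound M l))).
    - exists 1. intros l Hl. destruct (tv_le_dev_bound M l HM Hl) as [H0 H1].
      destruct (dev_bound_Series M l HM Hl) as [_ Sd]. rewrite Rabs_pos_eq; lra.
    - apply bounded_on_scal, Bdev.
    - intros l Hl. apply tv_le_dev_bound; auto. }
  rewrite (Ecb_scal PU HPU M _ _ Bdev).
  destruct (Ecb_Series PU HPU M (dev_bound M) 2) as [Eexp <-].
  - intros l Hl v. apply dev_bound_range; auto.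
  - intros l Hl. apply dev_bound_Series; auto.
  - intros l Hl. apply dev_bound_Series; auto.
  - destruct (delta'_Series M) as [Esq [-> _]]. destruct mean_atyp_sum as [Ea <-].
    assert (Edom : ex_series (fun v => / sqrt (INR M) * sqrt (moment2_typ v) + 2 * mean_atyp v))
      by (apply ex_series_Rplus; apply ex_series_Rscal; auto).
    eapply Rle_trans.
    { apply Rmult_le_compat_l; [lra|].
      refine (Series_le _ _ (fun v => conj _ (Ecb_dev_bound M v HM)) Edom).
      apply (Ecb_nonneg PU HPU); [|intros l Hl; apply dev_bound_range; auto].
      exists 2. intros l Hl. apply dev_bound_bounded; auto. }
    rewrite Series_plus, !Series_scal_l by (apply ex_series_Rscal; auto).
    right. field. lra.
Qed.

End Channel.

Theorem mainTheorem10
  (PU : nat -> R) (W : nat -> nat -> R) (M : nat) (tau : R)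
  (HPU0 : forall u, 0 <= PU u)
  (HPU1 : infinite_sum PU 1)
  (HW0 : forall u v, 0 <= W u v)
  (HW1 : forall u, infinite_sum (W u) 1)
  (HM : (1 <= M)%nat) :
  Ecb PU M (fun l => tv (codebook_out W l) (outdist PU W))
    <= prob_Ac PU W tau + delta' PU W M tau
  /\ delta' PU W M tau <= / 2 * sqrt (Rpower 2 tau / INR M).
Proof.
  assert (HPU : pmf PU) by (split; [exact HPU0|apply is_series_Reals, HPU1]).
  assert (HW : forall u, is_series (W u) 1) by (intros u; apply is_series_Reals, HW1).
  split.
  - exact (expected_tv_le PU W tau HPU HW0 HW M HM).
  - exact (delta'_le PU W tau HPU HW0 HW M HM).
Qed.
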